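(* Let $\mathcal S$ be a Hilbert space, $B$ a bounded normal operator on $\mathcal S$, and $g\in\mathscr T'$. Then the map $e^{B^*\otimes a(g)}$ is injective on $\mathcal S\hat\otimes\mathcal F_{\rm fin}(\mathscr T)$. Consequently $\langle\Psi,\Phi\rangle_{B,g}:=\langle e^{B^*\otimes a(g)}\Psi,e^{B^*\otimes a(g)}\Phi\rangle_{\mathcal S\otimes\mathcal F(\mathfrak h)}$ is a non-degenerate inner product on $\mathcal S\hat\otimes\mathcal F_{\rm fin}(\mathscr T)$.
   Context: Let $\mathfrak h$ be a complex Hilbert space, $\mathscr T$ a topological vector space continuously embedded in $\mathfrak h$ with dense image, $\mathscr T'$ the space of continuous antilinear functionals on $\mathscr T$; $\langle\varphi,f\rangle:=\overline{\varphi(f)}$ for $\varphi\in\mathscr T'$, $f\in\mathscr T$. $\mathcal F(\mathfrak h)$ is the symmetric Fock space, $\mathcal F_{\rm fin}(\mathscr T)$ the vectors with finitely many nonzero components, the $n$-th in the algebraic symmetric tensor product of $n$ copies of $\mathscr T$. For $g\in\mathscr T'$, $a(g)$ on $\mathcal F_{\rm fin}(\mathscr T)$ is defined linearly by $(a(g)\Psi)_n=\frac{\sqrt{n+1}}{(n+1)!}\sum_{\sigma\in S_{n+1}}\langle g,\psi_{\sigma(1)}\rangle\psi_{\sigma(2)}\otimes\cdots\otimes\psi_{\sigma(n+1)}$ for $\Psi_{n+1}=\psi_1\otimes_s\cdots\otimes_s\psi_{n+1}$. $\hat\otimes$ denotes the algebraic tensor product. $e^{B^*\otimes a(g)}$ is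 defined on $\mathcal S\hat\otimes\mathcal F_{\rm fin}(\mathscr T)$ by linear extension of $e^{B^*\otimes a(g)}(\varphi\otimes\Xi)=\sum_{k\ge0}\frac1{k!}((B^* )^k\varphi)\otimes(a(g)^k\Xi)$ (a finite sum). *)

From HB Require Import structures.
From mathcomp Require Import all_boot all_order all_algebra all_fingroup.
From mathcomp Require Import reals.
From mathcomp Require Import complex.
Set Implicit Arguments. Unset Strict Implicit. Unset Printing Implicit Defensive.
Import Order.TTheory GRing.Theory Num.Theory.
Local Open Scope ring_scope.
Local Open Scope complex_scope.

Section Defs.
Variable R : realType.
Local Notation C := R[i].

(* inner product: antilinear in the first, linear in the second argument *)
Definition is_inner_product (V : lmodType C) (ip : V -> V -> C) : Prop :=
  [/\ (forall x y z (c : C), ip x (c *: y + z) = c * ip x y + ip x z),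
      (forall x y, ip y x = (ip x y)^*),
      (forall x, 0 <= ip x x) &
      (forall x, ip x x = 0 -> x = 0)].

(* completeness w.r.t. the norm ||x|| = sqrt <x,x> (stated with squared norms) *)
Definition ip_complete (V : lmodType C) (ip : V -> V -> C) : Prop :=
  forall u : nat -> V,
    (forall e : C, 0 < e -> exists N, forall m n, (N <= m)%N -> (N <= n)%N ->
        ip (u m - u n) (u m - u n) < e) ->
    exists l : V, forall e : C, 0 < e -> exists N, forall n, (N <= n)%N ->
        ip (u n - l) (u n - l) < e.

Definition is_hilbert (V : lmodType C) (ip : V -> V -> C) : Prop :=
  is_inner_product ip /\ ip_complete ip.

Definition bounded_op (V : lmodType C) (ip : V -> V -> C) (B : V -> V) : Prop :=
  exists M : C, forall x, ip (B x) (B x) <= M * ip x x.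

Definition is_adjoint (V : lmodType C) (ip : V -> V -> C) (B Bs : V -> V) : Prop :=
  forall x y, ip (B x) y = ip x (Bs y).

Definition normal_op (V : lmodType C) (ip : V -> V -> C) (B Bs : V -> V) : Prop :=
  [/\ linear B, bounded_op ip B, is_adjoint ip B Bs & forall x, B (Bs x) = Bs (B x)].

Definition is_topology (T : Type) (op : (T -> Prop) -> Prop) : Prop :=
  [/\ op (fun _ => True),
      (forall U W, op U -> op W -> op (fun x => U x /\ W x)) &
      (forall (I : Type) (F : I -> T -> Prop), (forall i, op (F i)) ->
          op (fun x => exists i, F i x))].

Definition is_tvs (T : lmodType C) (op : (T -> Prop) -> Prop) : Prop :=
  [/\ is_topology op,
      (forall x y U, op U -> U (x + y) -> exists V W, [/\ op V, op W, V x, W y &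
           forall v w, V v -> W w -> U (v + w)]) &
      (forall (c : C) x U, op U -> U (c *: x) -> exists (e : C) V, [/\ 0 < e, op V, V x &
           forall (d : C) v, `|d - c| < e -> V v -> U (d *: v)])].

Definition cont_dense_embedding (T : lmodType C) (op : (T -> Prop) -> Prop)
    (H : lmodType C) (iph : H -> H -> C) (j : T -> H) : Prop :=
  [/\ linear j, injective j,
      (forall x (e : C), 0 < e -> exists U, [/\ op U, U x &
          forall y, U y -> iph (j y - j x) (j y - j x) < e]) &
      (forall f (e : C), 0 < e -> exists t, iph (j t - f) (j t - f) < e)].

Definition in_dual (T : lmodType C) (op : (T -> Prop) -> Prop) (g : T -> C) : Prop :=
  (forall (c : C) x y, g (c *: x + y) = c^* * g x + g y) /\
  (forall x (e : C), 0 < e -> exists U, [/\ op U, U x &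
      forall y, U y -> `|g y - g x| < e]).

Variables (S T : lmodType C).

(* A "full" formal tensor: finite sum of terms (c, s, [psi_1;..;psi_n])
   meaning  c . s (x) psi_1 (x) ... (x) psi_n  in  S (x) (n-fold tensor power).
   Two formal tensors denote the same vector in S (x) F(h) iff their difference
   has norm zero (see fzero). *)
Definition ftensor := seq (C * S * seq T).

Definition fscale (c : C) (X : ftensor) : ftensor :=
  [seq (c * t.1.1, t.1.2, t.2) | t <- X].
Definition fsub (X Y : ftensor) : ftensor := X ++ fscale (-1) Y.

(* inner product of S (x) F(h) (full Fock space; different particle numbers
   are orthogonal), computed on formal tensors *)
Definition ftensor_ip (ips : S -> S -> C) (H : lmodType C) (iph : H -> H -> C)
    (j : T -> H) (X Y : ftensor) : C :=
  \sum_(t <- X) \sum_(u <- Y)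
    (t.1.1)^* * u.1.1 * ips t.1.2 u.1.2 *
    (if size t.2 == size u.2 then \prod_(k < size t.2) iph (j (nth 0 t.2 k)) (j (nth 0 u.2 k))
     else 0).

(* Elements of S ^(x) F_fin(T): finite sums of terms (c, s, [psi_1;..;psi_n])
   meaning  c . s (x) (psi_1 (x)_s ... (x)_s psi_n) *)
Definition dtensor := seq (C * S * seq T).

(* psi_1 (x)_s ... (x)_s psi_n = (1/n!) sum_sigma psi_sigma(1) (x) ... (x) psi_sigma(n) *)
Definition symterm (t : C * S * seq T) : ftensor :=
  let n := size t.2 in
  [seq ((n`!%:R)^-1 * t.1.1, t.1.2, [seq nth 0 t.2 (val (s i)) | i <- enum 'I_n])
  | s : {perm 'I_n} <- enum {perm 'I_n}].

Definition embed (X : dtensor) : ftensor := flatten [seq symterm t | t <- X].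

(* a(g) acting on a full tensor: (a(g) psi_1(x)...(x)psi_{n+1}) = sqrt(n+1) <g,psi_1> psi_2(x)...(x)psi_{n+1},
   which on psi_1 (x)_s ... (x)_s psi_{n+1} is exactly the formula of the paper;
   <g, f> := conj (g f). *)
Definition annk (g : T -> C) (k : nat) (ps : seq T) : C :=
  if (k <= size ps)%N then
    \prod_(i < k) ((Num.sqrt ((size ps - i)%N%:R : R))%:C * (g (nth 0 ps i))^*)
  else 0.

(* e^{B^dag (x) a(g)} on a formal tensor: sum_k (1/k!) (Bdag^k s) (x) (a(g)^k Xi), Bdag = B^dagger *)
Definition expBa (Bs : S -> S) (g : T -> C) (X : ftensor) : ftensor :=
  flatten [seq [seq ((k`!%:R)^-1 * annk g k t.2 * t.1.1, iter k Bs t.1.2, drop k t.2)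
               | k <- iota 0 (size t.2).+1] | t <- X].

End Defs.

(* The form [ftensor_ip] is positive semidefinite by the Schur product
   theorem, so a formal tensor is null iff it is orthogonal to every pure
   tensor [s (x) phi_1 (x) ... (x) phi_n].  Pairing [e^{B^* (x) a(g)} Z] with
   such a tensor moves [B^*] onto [s] as [B^k] and, for each [k], evaluates the
   [(k + n)]-particle part of [Z] against [g] in [k] slots and against the
   [phi_i] in the others.  Since [j] is injective, a finite tensor annihilated
   by all slot functionals [<j ., j psi>] is annihilated by arbitrary
   antilinear functionals in every slot, so the exponential maps null tensors
   to null tensors.  Conversely it acts as the identity on the top-degree
   part, which gives injectivity by induction on the degree. *)

From HB Require Import structures.
From mathcomp Require Import all_boot all_order all_algebra all_fingroup.
From mathcomp Require Import reals complex.
From mathcomp Require Import ring.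
Import Order.TTheory GRing.Theory Num.Theory.
Set Implicit Arguments. Unset Strict Implicit. Unset Printing Implicit Defensive.
Local Open Scope ring_scope.

Section InnerProduct.
Variable R : realType.
Local Notation C := R[i].
Variables (V : lmodType C) (ip : V -> V -> C).
Hypothesis hip : is_inner_product ip.

Lemma ipC x y : ip y x = (ip x y)^*.
Proof. by case: hip. Qed.

Lemma ip_ge0 x : 0 <= ip x x.
Proof. by case: hip. Qed.

Lemma ip_eq0 x : ip x x = 0 -> x = 0.
Proof. by case: hip => _ _ _; apply. Qed.

Lemma ipr0 x : ip x 0 = 0.
Proof.
case: hip => /(_ x 0 0 1) + _ _ _.
by rewrite scale1r addr0 mul1r -{1}[ip x 0]addr0 => /addrI <-.
Qed.

Lemma ipZr x y c : ip x (c *: y) = c * ip x y.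
Proof. by case: hip => /(_ x y 0 c) + _ _ _; rewrite addr0 ipr0 addr0. Qed.

Lemma ipDr x y z : ip x (y + z) = ip x y + ip x z.
Proof. by case: hip => /(_ x y z 1) + _ _ _; rewrite scale1r mul1r. Qed.

Lemma ipNr x y : ip x (- y) = - ip x y.
Proof. by rewrite -scaleN1r ipZr mulN1r. Qed.

Lemma ipl0 x : ip 0 x = 0.
Proof. by rewrite ipC ipr0 rmorph0. Qed.

Lemma ipZl x y c : ip (c *: x) y = c^* * ip x y.
Proof. by rewrite ipC ipZr rmorphM /= -ipC. Qed.

Lemma ipDl x y z : ip (x + y) z = ip x z + ip y z.
Proof. by rewrite ipC ipDr rmorphD /= -!ipC. Qed.

Lemma ipNl x y : ip (- x) y = - ip x y.
Proof. by rewrite ipC ipNr rmorphN /= -ipC. Qed.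

End InnerProduct.

Section PositiveKernels.
Variable R : realType.
Local Notation C := R[i].

Definition psd_kernel m (M : 'I_m -> 'I_m -> C) :=
  forall a : 'I_m -> C, 0 <= \sum_i \sum_k (a i)^* * a k * M i k.

Lemma eq_psd_kernel m (M M' : 'I_m -> 'I_m -> C) : M =2 M' -> psd_kernel M -> psd_kernel M'.
Proof.
move=> eM hM a; under eq_bigr => i _ do under eq_bigr => k _ do rewrite -eM.
exact: hM.
Qed.

Lemma psd_kernel1 m : psd_kernel (fun i k : 'I_m => 1).
Proof.
move=> a; have -> : \sum_i \sum_k (a i)^* * a k * 1 = (\sum_i a i) * (\sum_i a i)^*.
  rewrite mulrC rmorph_sum big_distrl /=; apply: eq_bigr => i _.
  by rewrite big_distrr /=; apply: eq_bigr => k _; rewrite mulr1.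
exact: mulcJ_ge0.
Qed.

Lemma psd_kernel_weight m (M : 'I_m -> 'I_m -> C) (b : 'I_m -> C) :
  psd_kernel M -> psd_kernel (fun i k => (b i)^* * b k * M i k).
Proof.
move=> hM a; have := hM (fun i => a i * b i).
congr (0 <= _); apply: eq_bigr => i _; apply: eq_bigr => k _.
rewrite rmorphM; ring.
Qed.

Lemma psd_kernel_sum m K (M : nat -> 'I_m -> 'I_m -> C) :
  (forall d, psd_kernel (M d)) -> psd_kernel (fun i k => \sum_(d < K) M d i k).
Proof.
move=> hM a; under eq_bigr => i _ do under eq_bigr => k _ do rewrite big_distrr.
under eq_bigr => i _ do rewrite exchange_big.
by rewrite exchange_big /=; apply: sumr_ge0 => d _; apply: hM.
Qed.

Variables (V : lmodType C) (ip : V -> V -> C).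
Hypothesis hip : is_inner_product ip.

(* Induction on the number of possibly nonzero [y i]: subtracting from each
   [y i] its component along the last one, [v], splits the Gram kernel into a
   rank-one kernel and the Gram kernel of the remainders. *)
Lemma psd_kernel_schur m (M : 'I_m -> 'I_m -> C) (y : 'I_m -> V) :
  psd_kernel M -> psd_kernel (fun i k => M i k * ip (y i) (y k)).
Proof.
move=> hM; suff: forall n (y : 'I_m -> V), (forall i : 'I_m, (n <= i)%N -> y i = 0) ->
    psd_kernel (fun i k => M i k * ip (y i) (y k)).
  by move/(_ m y); apply=> i; rewrite leqNgt ltn_ord.
elim=> [|n IH] {}y hy a.
  by rewrite big1 // => i _; rewrite big1 // => k _; rewrite hy // (ipl0 hip) !mulr0.
pose v := \sum_(i : 'I_m | val i == n) y i.
pose r := ip v v.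
pose al i := ip v (y i) / r.
pose z i := y i - al i *: v.
have r_real : r^* = r by rewrite -(ipC hip).
have ip_y : forall i k, ip (y i) (y k) = (al i)^* * al k * r + ip (z i) (z k).
  move=> i k; have [r0|rn0] := eqVneq r 0.
    by rewrite /z /al r0 invr0 !mulr0 !scale0r !subr0 add0r.
  rewrite /z !(ipDl hip, ipDr hip, ipNl hip, ipNr hip, ipZl hip, ipZr hip) -/r.
  rewrite (ipC hip v (y i)) /al !rmorphM fmorphV /= r_real.
  by field.
have hz : forall i : 'I_m, (n <= i)%N -> z i = 0.
  move=> i; rewrite leq_eqVlt => /orP[/eqP ni|lt_ni]; last first.
    by rewrite /z /al hy // (ipr0 hip) mul0r scale0r subr0.
  have vE : v = y i by rewrite /v (big_pred1 i) // => k /=; rewrite ni val_eqE.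
  rewrite /z /al /r vE; have [yi0|yin0] := eqVneq (ip (y i) (y i)) 0.
    by rewrite (ip_eq0 hip yi0) scaler0 subr0.
  by rewrite divff // scale1r subrr.
have -> : \sum_i \sum_k (a i)^* * a k * (M i k * ip (y i) (y k)) =
   r * (\sum_i \sum_k (a i * al i)^* * (a k * al k) * M i k) +
   \sum_i \sum_k (a i)^* * a k * (M i k * ip (z i) (z k)).
  rewrite big_distrr -big_split; apply: eq_bigr => i _.
  rewrite big_distrr -big_split; apply: eq_bigr => k _.
  rewrite ip_y !rmorphM /=; ring.
by rewrite addr_ge0 ?mulr_ge0 ?(ip_ge0 hip) //; apply: IH.
Qed.

Lemma psd_kernel_gram_prod m d (x : nat -> 'I_m -> V) :
  psd_kernel (fun i k => \prod_(l < d) ip (x l i) (x l k)).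
Proof.
elim: d => [|d IH].
  by apply: eq_psd_kernel (@psd_kernel1 m) => i k; rewrite big_ord0.
apply: eq_psd_kernel (psd_kernel_schur (x d) IH) => i k.
by rewrite big_ord_recr.
Qed.

Lemma psd_kernel_fock m (sz : 'I_m -> nat) (x : nat -> 'I_m -> V) :
  psd_kernel (fun i k =>
    if sz i == sz k then \prod_(l < sz i) ip (x l i) (x l k) else 0).
Proof.
pose K := (\max_i sz i).+1.
have sz_lt i : (sz i < K)%N by rewrite ltnS (leq_bigmax i).
pose ind d i : C := (sz i == d)%:R.
have := psd_kernel_sum K (fun d => psd_kernel_weight (ind d) (psd_kernel_gram_prod d x)).
apply: eq_psd_kernel => i k /=.
rewrite (bigD1 (Ordinal (sz_lt i))) //= [X in _ + X]big1 => [|d /eqP ne]; last first.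
  suff -> : ind d i = 0 by rewrite rmorph0 !mul0r.
  by rewrite /ind; case: eqP => // e; case: ne; apply: val_inj.
rewrite addr0 /ind eqxx rmorph1 mul1r eq_sym.
by case: eqP => [->|_]; rewrite ?mul1r ?mul0r.
Qed.

End PositiveKernels.

Section FockForm.
Variable R : realType.
Local Notation C := R[i].
Variables (S T H : lmodType C) (ips : S -> S -> C) (iph : H -> H -> C) (j : T -> H).
Hypotheses (hips : is_inner_product ips) (hiph : is_inner_product iph).
Local Notation ip := (ftensor_ip ips iph j).
Local Notation ftensor := (ftensor S T).

Definition pure_tensor (s : S) (phi : seq T) : ftensor := [:: (1, s, phi)].

Definition ftensor_deg (A : ftensor) := \max_(t <- A) size t.2.

Lemma size_le_ftensor_deg (A : ftensor) t : t \in A -> (size t.2 <= ftensor_deg A)%N.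
Proof. by move=> tA; apply: (leq_bigmax_seq (F := fun t : C * S * seq T => size t.2)). Qed.

Lemma ftensor_ip_perml (A A' W : ftensor) : perm_eq A A' -> ip A W = ip A' W.
Proof. exact: perm_big. Qed.

Lemma ftensor_ip_catl (A A' W : ftensor) : ip (A ++ A') W = ip A W + ip A' W.
Proof. by rewrite /ftensor_ip big_cat. Qed.

Lemma ftensor_ip_catr (A A' W : ftensor) : ip W (A ++ A') = ip W A + ip W A'.
Proof. by rewrite /ftensor_ip -big_split; apply: eq_bigr => t _; rewrite big_cat. Qed.

Lemma ftensor_ip_scalel c (A W : ftensor) : ip (fscale c A) W = c^* * ip A W.
Proof.
rewrite /ftensor_ip big_map big_distrr; apply: eq_bigr => t _.
by rewrite big_distrr; apply: eq_bigr => u _ /=; rewrite rmorphM /=; ring.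
Qed.

Lemma ftensor_ip_scaler c (A W : ftensor) : ip W (fscale c A) = c * ip W A.
Proof.
rewrite /ftensor_ip big_distrr; apply: eq_bigr => t _.
by rewrite big_map big_distrr; apply: eq_bigr => u _ /=; ring.
Qed.

Lemma ftensor_ip_subl (A A' W : ftensor) : ip (fsub A A') W = ip A W - ip A' W.
Proof. by rewrite ftensor_ip_catl ftensor_ip_scalel rmorphN1 mulN1r. Qed.

Lemma ftensor_ipC (A A' : ftensor) : ip A' A = (ip A A')^*.
Proof.
rewrite /ftensor_ip rmorph_sum exchange_big; apply: eq_bigr => u _ /=.
rewrite rmorph_sum; apply: eq_bigr => t _ /=.
rewrite eq_sym; case: eqP => [e|_]; last by rewrite !mulr0 rmorph0.
rewrite !rmorphM rmorph_prod /= conjCK -(ipC hips) e.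
under [in RHS]eq_bigr => k _ do rewrite /= -(ipC hiph).
ring.
Qed.

Lemma ftensor_ip_ge0 (A : ftensor) : 0 <= ip A A.
Proof.
pose t0 : C * S * seq T := (0, 0, [::]).
pose c i := (nth t0 A i).1.1; pose s i := (nth t0 A i).1.2; pose psi i := (nth t0 A i).2.
have := psd_kernel_schur hips s
  (psd_kernel_fock hiph (fun i : 'I_(size A) => size (psi i)) (fun l i => j (nth 0 (psi i) l))) c.
rewrite /ftensor_ip (big_nth t0) big_mkord.
under [in X in _ -> _ <= X]eq_bigr => i _ do rewrite (big_nth t0) big_mkord.
congr (_ <= _); apply: eq_bigr => i _.
by apply: eq_bigr => k _; rewrite [_ * ips _ _]mulrC mulrA.
Qed.

(* Cauchy-Schwarz: expand [0 <= ip (A + l W) (A + l W)] with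
   [l = - (ip A W)^* / (ip W W + 1)]. *)
Lemma ftensor_ip_null (A : ftensor) : ip A A = 0 -> forall W, ip A W = 0.
Proof.
move=> A0 W; set p := ip A W; set q := ip W W.
have q_ge0 : 0 <= q := ftensor_ip_ge0 W.
have q_real : q^* = q by rewrite /q -ftensor_ipC.
have q1_gt0 : 0 < q + 1 by apply: ltr_wpDl.
have q2_gt0 : 0 < q + 2 by apply: ltr_wpDl => //; rewrite ltr0n.
pose l := - p^* / (q + 1).
have := ftensor_ip_ge0 (A ++ fscale l W).
rewrite !(ftensor_ip_catl, ftensor_ip_catr, ftensor_ip_scalel, ftensor_ip_scaler) A0 -/p -/q.
rewrite (ftensor_ipC A W) -/p.
have -> : 0 + l * p + (l^* * p^* + l^* * (l * q)) =
    - (p * p^* * ((q + 2) / ((q + 1) * (q + 1)))).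
  rewrite /l !(rmorphM, rmorphN, fmorphV, rmorphD, rmorph1) /= conjCK q_real.
  by field; rewrite gt_eqF.
rewrite oppr_ge0 => le0.
have ge0 : 0 <= p * p^* * ((q + 2) / ((q + 1) * (q + 1))).
  by rewrite mulr_ge0 ?mulcJ_ge0 // divr_ge0 ?mulr_ge0 ?ltW.
have /eqP : p * p^* * ((q + 2) / ((q + 1) * (q + 1))) = 0 by apply/eqP; rewrite eq_le le0 ge0.
by rewrite !mulf_eq0 conjC_eq0 invr_eq0 mulf_eq0 (gt_eqF q2_gt0) (gt_eqF q1_gt0) !orbF orbb => /eqP.
Qed.

Lemma ftensor_ip_pure_sum (A W : ftensor) :
  ip A W = \sum_(u <- W) u.1.1 * ip A (pure_tensor u.1.2 u.2).
Proof.
rewrite /ftensor_ip exchange_big; apply: eq_bigr => u _; rewrite big_distrr.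
by apply: eq_bigr => t _; rewrite big_seq1 /=; ring.
Qed.

Lemma ftensor_ip_null_pure (A : ftensor) :
  (forall s phi, ip A (pure_tensor s phi) = 0) -> forall W, ip A W = 0.
Proof. by move=> A0 W; rewrite ftensor_ip_pure_sum big1 // => u _; rewrite A0 mulr0. Qed.

Lemma ftensor_ip_pure_size (A : ftensor) s phi :
  (forall t, t \in A -> size t.2 != size phi) -> ip A (pure_tensor s phi) = 0.
Proof.
move=> hA; rewrite /ftensor_ip big_seq big1 // => t /hA ne.
by rewrite big_seq1 (negbTE ne) mulr0.
Qed.

End FockForm.

Section Antilinear.
Variable R : realType.
Local Notation C := R[i].
Variables (T H : lmodType C) (iph : H -> H -> C) (j : T -> H).
Hypotheses (hiph : is_inner_product iph) (j_lin : linear j) (j_inj : injective j).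

Definition antilinear (f : T -> C) := forall c x y, f (c *: x + y) = c^* * f x + f y.

Lemma antilinear0 f : antilinear f -> f 0 = 0.
Proof.
move=> /(_ 1 0 0); rewrite scale1r addr0 rmorph1 mul1r.
by rewrite -{1}[f 0]addr0 => /addrI <-.
Qed.

Lemma antilinear_sum f (I : Type) (r : seq I) (b : I -> C) (x : I -> T) : antilinear f ->
  f (\sum_(t <- r) b t *: x t) = \sum_(t <- r) (b t)^* * f (x t).
Proof.
move=> hf; elim: r => [|t r IH]; first by rewrite !big_nil antilinear0.
by rewrite !big_cons hf IH.
Qed.

Lemma antilinear_ipl y : antilinear (fun x => iph (j x) y).
Proof. by move=> c x z /=; rewrite j_lin (ipDl hiph) (ipZl hiph). Qed.

Lemma null_slot (I : Type) (r : seq I) (a : I -> C) (x : I -> T) :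
  (forall y, \sum_(t <- r) a t * iph (j (x t)) (j y) = 0) ->
  forall f, antilinear f -> \sum_(t <- r) a t * f (x t) = 0.
Proof.
move=> ha f hf; pose v := \sum_(t <- r) (a t)^* *: x t.
have fv h : antilinear h -> h v = \sum_(t <- r) a t * h (x t).
  by move=> hh; rewrite antilinear_sum //; under eq_bigr do rewrite conjCK.
have j0 : j 0 = 0.
  by move: (j_lin 1 0 0); rewrite !scale1r addr0 -{1}[j 0]addr0 => /addrI <-.
have jv0 : j v = j 0.
  by rewrite j0; apply: (ip_eq0 hiph); rewrite (fv _ (antilinear_ipl (j v))) ha.
by rewrite -fv // (j_inj jv0) antilinear0.
Qed.

Lemma null_slots (I : Type) (r : seq I) (a : I -> C) (psi : I -> nat -> T) N :
  (forall chi : nat -> T, \sum_(t <- r) a t * \prod_(l < N) iph (j (psi t l)) (j (chi l)) = 0) ->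
  forall F : nat -> T -> C, (forall l, antilinear (F l)) ->
  \sum_(t <- r) a t * \prod_(l < N) F l (psi t l) = 0.
Proof.
move=> ha F hF.
pose mixed m chi t l := if (l < m)%N then F l (psi t l) else iph (j (psi t l)) (j (chi l)).
suff mixed0 m chi : \sum_(t <- r) a t * \prod_(l < N) mixed m chi t l = 0.
  rewrite -[RHS](mixed0 N (fun=> 0)); apply: eq_bigr => t _.
  by congr (_ * _); apply: eq_bigr => l _; rewrite /mixed ltn_ord.
elim: m chi => [|m IH] chi; first exact: ha.
have [lt_mN|le_Nm] := ltnP m N; last first.
  rewrite -[RHS](IH chi); apply: eq_bigr => t _; congr (_ * _); apply: eq_bigr => l _.
  have lt_lm : (l < m)%N := leq_trans (ltn_ord l) le_Nm.
  by rewrite /mixed ltnS (ltnW lt_lm) lt_lm.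
pose m' := Ordinal lt_mN.
pose others t := \prod_(l < N | l != m') mixed m chi t l.
have split_m t : \prod_(l < N) mixed m.+1 chi t l = others t * F m (psi t m).
  rewrite (bigD1 m') //= mulrC /mixed ltnSn; congr (_ * _); apply: eq_bigr => l.
  by rewrite -val_eqE ltnS leq_eqVlt => /negbTE ->.
under eq_bigr do rewrite split_m mulrA.
apply: (null_slot (a := fun t => a t * others t)) => // y.
rewrite -[RHS](IH (fun l => if l == m then y else chi l)); apply: eq_bigr => t _.
rewrite (bigD1 m') //= /mixed ltnn eqxx [iph _ _ * _]mulrC mulrA; congr (_ * _ * _).
by apply: eq_bigr => l; rewrite -val_eqE => /negbTE ->.
Qed.

End Antilinear.

Section Exponential.
Variable R : realType.
Local Notation C := R[i].
Variables (S T H : lmodType C) (ips : S -> S -> C) (iph : H -> H -> C) (j : T -> H).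
Variables (B Bs : S -> S) (g : T -> C).
Hypotheses (hips : is_inner_product ips) (hiph : is_inner_product iph).
Hypotheses (j_lin : linear j) (j_inj : injective j).
Hypotheses (hB : is_adjoint ips B Bs) (hg : antilinear g).
Local Notation ip := (ftensor_ip ips iph j).
Local Notation ftensor := (ftensor S T).
Local Notation E := (expBa Bs g).

Lemma expBa_cat (A A' : ftensor) : E (A ++ A') = E A ++ E A'.
Proof. by rewrite /expBa map_cat flatten_cat. Qed.

Lemma expBa_scale c (A : ftensor) : E (fscale c A) = fscale c (E A).
Proof.
rewrite /expBa /fscale map_flatten -!map_comp; congr flatten; apply: eq_map => t.
by rewrite /comp -map_comp; apply: eq_map => k; rewrite /comp /= mulrCA.
Qed.

Lemma perm_expBa (A A' : ftensor) : perm_eq A A' -> perm_eq (E A) (E A').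
Proof. by move=> pA; apply/perm_flatten/perm_map. Qed.

Lemma adjoint_iter k x y : ips (iter k Bs x) y = ips x (iter k B y).
Proof.
elim: k x y => [//|k IH] x y.
by rewrite iterS iterSr -IH (ipC hips) -hB -(ipC hips).
Qed.

Lemma ftensor_ip_expBa_pure (Z : ftensor) s phi M :
  (forall t, t \in Z -> (size t.2 < M)%N) ->
  ip (E Z) (pure_tensor s phi) =
  \sum_(k < M) \sum_(t <- Z) (size t.2 == k + size phi)%N%:R *
     (((k`!)%:R)^-1 * annk g k t.2 * t.1.1)^* * ips (iter k Bs t.1.2) s *
     \prod_(l < size phi) iph (j (nth 0 t.2 (k + l)%N)) (j (nth 0 phi l)).
Proof.
move=> hM; rewrite exchange_big /ftensor_ip /expBa big_flatten big_map.
apply: eq_big_seq => t /hM lt_tM; rewrite big_map -(subn0 (size t.2).+1) -/(index_iota _ _).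
rewrite (big_nat_widen _ _ _ _ _ lt_tM) big_mkord big_mkcond /=.
apply: eq_bigr => k _; rewrite ltnS; case: leqP => [le_kt|lt_tk]; last first.
  by rewrite ltn_eqF ?mul0r // ltn_addr.
rewrite big_seq1 /= mulr1 size_drop.
have [e|ne] := eqVneq (size t.2) (k + size phi)%N; last first.
  by rewrite -(eqn_add2l k) subnKC // (negbTE ne) mulr0 !mul0r.
rewrite e addKn eqxx mul1r; congr (_ * _).
by apply: eq_bigr => l _; rewrite nth_drop.
Qed.

Lemma null_ftensor_slots (Z : ftensor) : ip Z Z = 0 ->
  forall s N (F : nat -> T -> C), (forall l, antilinear (F l)) ->
  \sum_(t <- Z) (size t.2 == N)%:R * t.1.1^* * ips t.1.2 s *
     \prod_(l < N) F l (nth 0 t.2 l) = 0.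
Proof.
move=> Z0 s N F hF.
apply: (null_slots hiph j_lin j_inj (a := fun t => _ * _ * _)
  (psi := fun t l => nth 0 t.2 l)) hF => chi.
rewrite -[RHS](ftensor_ip_null hips hiph Z0 (pure_tensor s (mkseq chi N))).
apply: eq_bigr => t _; rewrite big_seq1 /= size_mkseq mulr1.
case: eqP => [->|_]; last by rewrite !mul0r mulr0.
by rewrite mul1r; congr (_ * _); apply: eq_bigr => l _; rewrite nth_mkseq.
Qed.

Lemma expBa_null (Z : ftensor) : ip Z Z = 0 -> forall W, ip (E Z) W = 0.
Proof.
move=> Z0; apply: ftensor_ip_null_pure => s phi; set n := size phi.
rewrite (@ftensor_ip_expBa_pure _ _ _ (ftensor_deg Z).+1) => [|t /size_le_ftensor_deg //].
rewrite big1 // => k _.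
pose F l := if (l < k)%N then g else fun x => iph (j x) (j (nth 0 phi (l - k))).
have hF l : antilinear (F l).
  by rewrite /F; case: ifP => _; [exact: hg | exact: antilinear_ipl].
pose kap := ((k`!)%:R^-1)^* * \prod_(i < k) ((Num.sqrt ((k + n - i)%N%:R : R))%:C%C)^*.
rewrite -[RHS](mulr0 kap).
rewrite -[in RHS](@null_ftensor_slots Z Z0 (iter k B s) (k + n)%N F hF) big_distrr /=.
apply: eq_big_seq => t _.
have [e|ne] := eqVneq (size t.2) (k + n)%N; last by rewrite !mul0r mulr0.
rewrite !mul1r adjoint_iter /annk e leq_addr big_split_ord /= !rmorphM rmorph_prod /=.
under eq_bigr do rewrite rmorphM /= conjCK.
rewrite big_split /=.
have -> : \prod_(i < k) F (lshift n i) (nth 0 t.2 i) = \prod_(i < k) g (nth 0 t.2 i).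
  by apply: eq_bigr => i _; rewrite /F /= ltn_ord.
have -> : \prod_(i < n) F (rshift k i) (nth 0 t.2 (k + i)) =
    \prod_(i < n) iph (j (nth 0 t.2 (k + i))) (j (nth 0 phi i)).
  by apply: eq_bigr => i _; rewrite /F /= ltnNge leq_addr /= addKn.
by rewrite /kap; ring.
Qed.

Lemma expBa_top (Z : ftensor) s phi : (forall t, t \in Z -> (size t.2 <= size phi)%N) ->
  ip (E Z) (pure_tensor s phi) = ip Z (pure_tensor s phi).
Proof.
move=> hZ; rewrite (@ftensor_ip_expBa_pure _ _ _ (size phi).+1) => [|t /hZ //].
rewrite big_ord_recl [X in _ + X]big1 ?addr0 => [|k _]; last first.
  rewrite big1_seq // => t /hZ le_t.
  by rewrite ltn_eqF ?mul0r // ltnS (leq_trans le_t) ?leq_addl.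
apply: eq_bigr => t _; rewrite big_seq1 /= /annk big_ord0 fact0 invr1 !mul1r mulr1.
case: eqP => [->|_]; last by rewrite !mul0r mulr0.
by rewrite mul1r.
Qed.

Lemma expBa_null_inv (Z : ftensor) : ip (E Z) (E Z) = 0 -> ip Z Z = 0.
Proof.
suff: forall N (Z : ftensor), (forall t, t \in Z -> (size t.2 < N)%N) ->
    ip (E Z) (E Z) = 0 -> ip Z Z = 0.
  by move/(_ (ftensor_deg Z).+1 Z); apply=> t /size_le_ftensor_deg.
elim=> [|N IH] {}Z hZ EZ0.
  by case: Z hZ {EZ0} => [|t Z] hZ; [rewrite /ftensor_ip big_nil | have := hZ t (mem_head _ _)].
pose top (t : C * S * seq T) := size t.2 == N.
set Zt := filter top Z; set Zl := filter (predC top) Z.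
have permZ : perm_eq (Zt ++ Zl) Z by rewrite perm_filterC.
have ipZ W : ip Z W = ip Zt W + ip Zl W.
  by rewrite -(ftensor_ip_perml ips iph j W permZ) ftensor_ip_catl.
have ipEZ W : ip (E Z) W = ip (E Zt) W + ip (E Zl) W.
  by rewrite -(ftensor_ip_perml ips iph j W (perm_expBa permZ)) expBa_cat ftensor_ip_catl.
have EZ_null := ftensor_ip_null hips hiph EZ0.
have Zt_null : forall W, ip Zt W = 0.
  apply: ftensor_ip_null_pure => s phi.
  have [e|ne] := eqVneq (size phi) N.
    have Zl_pure : ip Zl (pure_tensor s phi) = 0.
      by apply: ftensor_ip_pure_size => t; rewrite mem_filter e => /andP[].
    have := ipZ (pure_tensor s phi); rewrite Zl_pure addr0 => <-.
    by rewrite -expBa_top ?EZ_null // e => t /hZ.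
  apply: ftensor_ip_pure_size => t; rewrite mem_filter => /andP[/eqP -> _].
  by rewrite eq_sym.
have EZl_null : ip (E Zl) (E Zl) = 0.
  by have := ipEZ (E Zl); rewrite EZ_null expBa_null // add0r => <-.
have Zl_deg t : t \in Zl -> (size t.2 < N)%N.
  by rewrite mem_filter /top => /andP[/negbTE ne /hZ]; rewrite ltnS leq_eqVlt ne.
by rewrite ipZ Zt_null add0r (ftensor_ip_null hips hiph (IH Zl Zl_deg EZl_null)).
Qed.

End Exponential.

Section Embed.
Variable R : realType.
Variables (S T : lmodType R[i]).

Lemma embed_cat (X Y : dtensor S T) : embed (X ++ Y) = embed X ++ embed Y.
Proof. by rewrite /embed map_cat flatten_cat. Qed.

Lemma embed_scale c (X : dtensor S T) : embed (fscale c X) = fscale c (embed X).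
Proof.
rewrite /embed /fscale map_flatten -!map_comp; congr flatten; apply: eq_map => t.
by rewrite /comp /symterm /= -map_comp; apply: eq_map => k; rewrite /comp /= mulrCA.
Qed.

End Embed.

Local Open Scope complex_scope.

Theorem proposition3p7
  (R : realType)
  (* the Hilbert space h *)
  (H : lmodType R[i]) (iph : H -> H -> R[i]) (hH : is_hilbert iph)
  (* the topological vector space T, continuously and densely embedded in h by j *)
  (T : lmodType R[i]) (opT : (T -> Prop) -> Prop) (hT : is_tvs opT)
  (j : T -> H) (hj : cont_dense_embedding opT iph j)
  (* the Hilbert space S and the bounded normal operator B with adjoint Bs *)
  (S : lmodType R[i]) (ips : S -> S -> R[i]) (hS : is_hilbert ips)
  (B Bs : S -> S) (hB : normal_op ips B Bs)
  (* g in T' *)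
  (g : T -> R[i]) (hg : in_dual opT g) :
  let ip := ftensor_ip ips iph j in
  (* equality of elements of S ^(x) F_fin(T) (as vectors of S (x) F(h)) *)
  let equiv (X Y : dtensor S T) := ip (fsub (embed X) (embed Y)) (fsub (embed X) (embed Y)) = 0 in
  (* E := e^{B^* (x) a(g)} *)
  let E (X : dtensor S T) := expBa Bs g (embed X) in
  let ipBg (X Y : dtensor S T) := ip (E X) (E Y) in
  (* E is a well-defined injective map on S ^(x) F_fin(T) *)
  (forall X Y, equiv X Y <-> ip (fsub (E X) (E Y)) (fsub (E X) (E Y)) = 0) /\
  (* <.,.>_{B,g} is a well-defined non-degenerate inner product on S ^(x) F_fin(T) *)
  [/\ (forall X X' Y, equiv X X' -> ipBg X Y = ipBg X' Y),
      (forall X Y1 Y2 (c : R[i]), ipBg X (fscale c Y1 ++ Y2) = c * ipBg X Y1 + ipBg X Y2),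
      (forall X Y, ipBg Y X = (ipBg X Y)^*),
      (forall X, 0 <= ipBg X X) &
      (forall X, (forall Y, ipBg X Y = 0) -> equiv X [::])].
Proof.
move=> ip equiv E ipBg.
have [[hips _] [hiph _]] := (hS, hH).
case: hj => j_lin j_inj _ _; case: hB => _ _ hadj _; case: hg => g_anti _.
have E_null := expBa_null hips hiph j_lin j_inj hadj g_anti.
have E_null_inv := expBa_null_inv hips hiph j_lin j_inj hadj g_anti.
have E_sub X Y : fsub (E X) (E Y) = expBa Bs g (fsub (embed X) (embed Y)).
  by rewrite /E /fsub expBa_cat expBa_scale.
split=> [X Y|]; first by rewrite /equiv E_sub; split=> [/E_null|/E_null_inv].
split.
- move=> X X' Y /E_null; rewrite -E_sub => /(_ (E Y)).
  by rewrite ftensor_ip_subl => /eqP; rewrite subr_eq0 => /eqP.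
- move=> X Y1 Y2 c; rewrite /ipBg /E /ip embed_cat embed_scale expBa_cat expBa_scale.
  by rewrite ftensor_ip_catr ftensor_ip_scaler.
- by move=> X Y; apply: ftensor_ipC.
- by move=> X; apply: ftensor_ip_ge0.
- by move=> X X0; rewrite /equiv /fsub cats0; apply/E_null_inv/X0.
Qed.
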